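(* Let $K$ be a field, $R$ an $\mathbb N$-graded $K$-algebra, and let $A=\sigma(R)\langle x_1,x_2\rangle$ be a connected graded quasi-commutative skew PBW extension of $R$. Then $A$ is a connected graded trimmed right double Ore extension of $R$.
   Context: All algebras are over a field $K$; a graded algebra $B$ is connected if $B_0=K$. A ring $A$ is a skew PBW extension of $R$ in $x_1,\dots,x_n$, written $\sigma(R)\langle x_1,\dots,x_n\rangle$, if $R\subseteq A$; $A$ is a free left $R$-module with basis the monomials $x_1^{\alpha_1}\cdots x_n^{\alpha_n}$; for each $i$ and $r\in R\setminus\{0\}$ there is $c_{i,r}\in R\setminus\{0\}$ with $x_ir-c_{i,r}x_i\in R$; and for all $i,j$ there is $c_{i,j}\in R\setminus\{0\}$ with $x_jx_i-c_{i,j}x_ix_j\in R+Rx_1+\cdots+Rx_n$. Then $x_ir=\sigma_i(r)x_i+\delta_i(r)$ with $\sigma_i$ an injective endomorphism and $\delta_i$ a $\sigma_i$-derivation. It is quasi-commutative if in fact $x_ir=c_{i,r}x_i$ and $x_jx_i=c_{i,j}x_ix_j$ (with $c_{i,r},c_{i,j}\in R\setminus\{0\}$). It is bijective if all $\sigma_i$ are bijective and all $c_{i,j}$ invertible. It is graded if it is bijective, $R$ is $\mathbb N$-graded, each $\sigma_i$ is graded, $\delta_i(R_m)\subseteq R_{m+1}$, and $x_jx_i-c_{i,j}x_ix_j\in R_2+R_1x_1+\cdots+R_1x_n$ with $c_{i,j}\in R_0$; the grading is $A_p=\mathrm{span}\{r_tx^\alpha: r_t\in R_t,\ t+|\alpha|=p\}$.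 A $K$-algebra $B\supseteq R$ is a right double Ore extension of $R$ if it is generated by $R$ and $x_1,x_2$; $x_2x_1=p_{12}x_1x_2+p_{11}x_1^2+\tau_1x_1+\tau_2x_2+\tau_0$ with $p_{12},p_{11}\in K$, $\tau_i\in R$; $B$ is a free left $R$-module with basis $\{x_1^ax_2^b\}$; and $x_1R+x_2R\subseteq Rx_1+Rx_2+R$. Writing $x_ir=\sigma_{i1}(r)x_1+\sigma_{i2}(r)x_2+\delta_i(r)$, it is trimmed if $\delta_1=\delta_2=0$ and $\tau_0=\tau_1=\tau_2=0$. It is graded if all relations are homogeneous with $\deg x_1=\deg x_2=1$. *)

From HB Require Import structures.
From mathcomp Require Import all_boot all_order all_algebra.
Set Implicit Arguments. Unset Strict Implicit. Unset Printing Implicit Defensive.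
Import GRing.Theory.
Local Open Scope ring_scope.

(* Setting: K a field, A a K-algebra (not necessarily commutative),
   R a subset of A (the coefficient algebra), Rg m = R_m the homogeneous
   components of a grading of R, and x1 x2 : A the two generators. *)

Section Defs.
Variables (K : fieldType) (A : algType K).

Definition xx (x1 x2 : A) (i : bool) : A := if i then x2 else x1.

Definition is_subalg (R : {pred A}) : Prop :=
  [/\ 1 \in R,
      (forall a b, a \in R -> b \in R -> a + b \in R),
      (forall a, a \in R -> - a \in R),
      (forall a b, a \in R -> b \in R -> a * b \in R) &
      (forall (k : K) a, a \in R -> k *: a \in R)].

Definition is_Ngrading (R : {pred A}) (Rg : nat -> {pred A}) : Prop :=
  (forall m a, a \in Rg m -> a \in R) /\
  (forall m, 0 \in Rg m) /\
  (forall m a b, a \in Rg m -> b \in Rg m -> a + b \in Rg m) /\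
  (forall m (k : K) a, a \in Rg m -> k *: a \in Rg m) /\
  (forall m n a b, a \in Rg m -> b \in Rg n -> a * b \in Rg (m + n)) /\
  1 \in Rg 0 /\
  (forall r, r \in R -> exists N (f : nat -> A),
      (forall m, f m \in Rg m) /\ r = \sum_(m < N) f m) /\
  (forall N (f : nat -> A), (forall m, f m \in Rg m) ->
      \sum_(m < N) f m = 0 -> forall m, (m < N)%N -> f m = 0).

Definition mono_sum (x1 x2 : A) (N : nat) (c : nat -> nat -> A) : A :=
  \sum_(i < N) \sum_(j < N) c i j * (x1 ^+ i * x2 ^+ j).

Definition free_basis (R : {pred A}) (x1 x2 : A) : Prop :=
  (forall z : A, exists N (c : nat -> nat -> A),
      (forall i j, c i j \in R) /\ z = mono_sum x1 x2 N c) /\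
  (forall N (c : nat -> nat -> A), (forall i j, c i j \in R) ->
      mono_sum x1 x2 N c = 0 ->
      forall i j, (i < N)%N -> (j < N)%N -> c i j = 0).

Definition generated_by (R : {pred A}) (x1 x2 : A) : Prop :=
  forall S : {pred A}, is_subalg S -> {subset R <= S} -> x1 \in S -> x2 \in S ->
    forall z : A, z \in S.

Definition skewPBW2 (R : {pred A}) (x1 x2 : A) : Prop :=
  [/\ is_subalg R,
      free_basis R x1 x2,
      (forall i r, r \in R -> r != 0 -> exists c, [/\ c \in R, c != 0 &
          xx x1 x2 i * r - c * xx x1 x2 i \in R]) &
      (forall i j, exists c, [/\ c \in R, c != 0 &
          exists r0 r1 r2, [/\ r0 \in R, r1 \in R, r2 \in R &
            xx x1 x2 j * xx x1 x2 i - c * xx x1 x2 i * xx x1 x2 j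
              = r0 + r1 * x1 + r2 * x2]])].

Definition quasi_comm_skewPBW2 (R : {pred A}) (x1 x2 : A) : Prop :=
  [/\ skewPBW2 R x1 x2,
      (forall i r, r \in R -> r != 0 -> exists c, [/\ c \in R, c != 0 &
          xx x1 x2 i * r = c * xx x1 x2 i]) &
      (forall i j, exists c, [/\ c \in R, c != 0 &
          xx x1 x2 j * xx x1 x2 i = c * xx x1 x2 i * xx x1 x2 j])].

Definition graded_skewPBW2 (R : {pred A}) (Rg : nat -> {pred A}) (x1 x2 : A) : Prop :=
  [/\ skewPBW2 R x1 x2,
      is_Ngrading R Rg,
      (forall i, exists sigma : A -> A,
        [/\ (forall r, r \in R -> sigma r \in R /\
               xx x1 x2 i * r - sigma r * xx x1 x2 i \in R),
            {in R &, injective sigma},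
            (forall s, s \in R -> exists2 r, r \in R & sigma r = s),
            (forall m r, r \in Rg m -> sigma r \in Rg m) &
            (forall m r, r \in Rg m ->
               xx x1 x2 i * r - sigma r * xx x1 x2 i \in Rg m.+1)]) &
      (forall i j, exists c, [/\ c \in Rg 0, c != 0,
          (exists2 d, d \in R & c * d = 1 /\ d * c = 1) &
          exists r0 r1 r2, [/\ r0 \in Rg 2, r1 \in Rg 1, r2 \in Rg 1 &
            xx x1 x2 j * xx x1 x2 i - c * xx x1 x2 i * xx x1 x2 j
              = r0 + r1 * x1 + r2 * x2]])].

(* the homogeneous component of degree p of A:
   A_p = span{ r_t x1^i x2^j : r_t \in R_t, t + i + j = p } *)
Definition deg_comp (Rg : nat -> {pred A}) (x1 x2 : A) (p : nat) (z : A) : Prop :=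
  exists N (c : nat -> nat -> A),
    [/\ (forall i j, (i + j <= p)%N -> c i j \in Rg (p - (i + j))%N),
        (forall i j, (p < i + j)%N -> c i j = 0) &
        z = mono_sum x1 x2 N c].

Definition connected (Rg : nat -> {pred A}) (x1 x2 : A) : Prop :=
  forall z : A, deg_comp Rg x1 x2 0 z <-> exists k : K, z = k%:A.

Definition connected_graded_qc_skewPBW2 (R : {pred A}) (Rg : nat -> {pred A}) (x1 x2 : A) : Prop :=
  [/\ quasi_comm_skewPBW2 R x1 x2, graded_skewPBW2 R Rg x1 x2 &
      connected Rg x1 x2].

Definition right_double_Ore (R : {pred A}) (x1 x2 : A) : Prop :=
  [/\ is_subalg R,
      generated_by R x1 x2,
      (exists (p12 p11 : K) t0 t1 t2, [/\ t0 \in R, t1 \in R, t2 \in R &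
          x2 * x1 = p12 *: (x1 * x2) + p11 *: (x1 ^+ 2)
                    + t1 * x1 + t2 * x2 + t0]),
      free_basis R x1 x2 &
      (forall i r, r \in R -> exists a b d, [/\ a \in R, b \in R, d \in R &
          xx x1 x2 i * r = a * x1 + b * x2 + d])].

(* trimmed: delta_1 = delta_2 = 0 and tau_0 = tau_1 = tau_2 = 0 *)
Definition trimmed (R : {pred A}) (x1 x2 : A) : Prop :=
  (exists p12 p11 : K, x2 * x1 = p12 *: (x1 * x2) + p11 *: (x1 ^+ 2)) /\
  (forall i r, r \in R -> exists a b, [/\ a \in R, b \in R &
      xx x1 x2 i * r = a * x1 + b * x2]).

(* graded: all relations homogeneous with deg x1 = deg x2 = 1 *)
Definition graded_rdo (R : {pred A}) (Rg : nat -> {pred A}) (x1 x2 : A) : Prop :=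
  [/\ is_Ngrading R Rg,
      (exists (p12 p11 : K) t0 t1 t2, [/\ t0 \in Rg 2, t1 \in Rg 1, t2 \in Rg 1 &
          x2 * x1 = p12 *: (x1 * x2) + p11 *: (x1 ^+ 2)
                    + t1 * x1 + t2 * x2 + t0]) &
      (forall i m r, r \in Rg m -> exists a b d,
          [/\ a \in Rg m, b \in Rg m, d \in Rg m.+1 &
          xx x1 x2 i * r = a * x1 + b * x2 + d])].

Definition connected_graded_trimmed_rdo (R : {pred A}) (Rg : nat -> {pred A}) (x1 x2 : A) : Prop :=
  [/\ right_double_Ore R x1 x2, trimmed R x1 x2, graded_rdo R Rg x1 x2 &
      connected Rg x1 x2].

End Defs.

From mathcomp Require Import all_boot all_order all_algebra.
Local Open Scope ring_scope.
Import GRing.Theory.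
Set Implicit Arguments. Unset Strict Implicit. Unset Printing Implicit Defensive.

(* Quasi-commutativity gives x2 x1 = c x1 x2 with c in R, and gradedness gives
   x2 x1 = c' x1 x2 + r0 + r1 x1 + r2 x2 with c' in R_0.  Freeness of the basis
   {x1^i x2^j} forces c = c', and connectedness (R_0 lies in A_0 = K) makes c a
   scalar.  The relations x_i r = c x_i of a quasi-commutative extension are then
   of trimmed right double Ore shape, and the graded endomorphisms sigma_i supply
   their homogeneous versions. *)

Section QuasiCommutativeSkewPBW.
Variables (K : fieldType) (A : algType K).
Implicit Types (R S : {pred A}) (Rg : nat -> {pred A}).

Lemma subalg0 S : is_subalg S -> 0 \in S.
Proof. by case=> S1 SD SN _ _; rewrite -(subrr 1) SD ?SN. Qed.

Lemma subalgX S x n : is_subalg S -> x \in S -> x ^+ n \in S.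
Proof.
case=> S1 _ _ SM _ xS; elim: n => [|n IHn]; first by rewrite expr0.
by rewrite exprS SM.
Qed.

Lemma subalg_mono_sum S x1 x2 N c :
  is_subalg S -> (forall i j, c i j \in S) -> x1 \in S -> x2 \in S ->
  mono_sum x1 x2 N c \in S.
Proof.
move=> subS cS x1S x2S; have S0 := subalg0 subS; have [_ SD _ SM _] := subS.
rewrite /mono_sum; apply: (big_ind [in S]) => // i _.
apply: (big_ind [in S]) => // j _.
by rewrite SM ?SM ?subalgX.
Qed.

Lemma free_basis_generated R x1 x2 : free_basis R x1 x2 -> generated_by R x1 x2.
Proof.
move=> [span _] S subS sRS x1S x2S z; have [N [c [cR ->]]] := span z.
by apply: subalg_mono_sum => // i j; apply: sRS.
Qed.

Lemma mono_sum2 x1 x2 (c : nat -> nat -> A) :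
  mono_sum x1 x2 2 c
  = c 0%N 0%N + c 0%N 1%N * x2 + (c 1%N 0%N * x1 + c 1%N 1%N * (x1 * x2)).
Proof.
by rewrite /mono_sum !big_ord_recr !big_ord0 /= !add0r !expr0 !expr1 !mulr1 !mul1r.
Qed.

Lemma free_basis_x1x2_coef_unique R x1 x2 a b r0 r1 r2 :
  is_subalg R -> free_basis R x1 x2 ->
  a \in R -> b \in R -> r0 \in R -> r1 \in R -> r2 \in R ->
  (a - b) * (x1 * x2) = r0 + r1 * x1 + r2 * x2 -> a = b.
Proof.
move=> subR [_ indep] aR bR r0R r1R r2R eab; have [_ RD RN _ _] := subR.
pose c i j : A := match i, j with
  | 0%N, 0%N => - r0 | 0%N, 1%N => - r2 | 1%N, 0%N => - r1 | 1%N, 1%N => a - b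
  | _, _ => 0 end.
have cR i j : c i j \in R.
  by move: i j => [|[|i]] [|[|j]]; do ?[apply: RD | apply: RN]; rewrite ?subalg0.
have c0 : mono_sum x1 x2 2 c = 0.
  by rewrite mono_sum2 /= eab !mulNr -opprD addrAC [_ + r1 * x1]addrC addKr addNr.
by apply/eqP; rewrite -subr_eq0; apply/eqP/(indep 2%N c cR c0 1%N 1%N).
Qed.

Lemma connected_deg0_scalar Rg x1 x2 c :
  connected Rg x1 x2 -> c \in Rg 0 -> exists k : K, c = k%:A.
Proof.
move=> conn cRg0; apply/(conn c).1.
exists 1%N, (fun i j => if (i == 0%N) && (j == 0%N) then c else 0); split.
- by case=> [|i] [|j].
- by case=> [|i] [|j].
- by rewrite /mono_sum !big_ord_recr !big_ord0 /= !add0r !expr0 !mulr1.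
Qed.

Lemma connected_graded_qc_x2x1_scalar R Rg x1 x2 :
  connected_graded_qc_skewPBW2 R Rg x1 x2 -> exists k : K, x2 * x1 = k *: (x1 * x2).
Proof.
case=> [[[subR freeR _ _] _ qc_x] [_ [RgR _] _ gr_x] conn].
have [c [cR _ x21c]] := qc_x false true.
have [c' [c'0 _ _ [r0 [r1 [r2 [r0g r1g r2g x21c']]]]]] := gr_x false true.
rewrite /= x21c in x21c'.
have cc' : c = c'.
  apply: (free_basis_x1x2_coef_unique subR freeR cR (RgR _ _ c'0)
            (RgR _ _ r0g) (RgR _ _ r1g) (RgR _ _ r2g)).
  by rewrite mulrBl !mulrA.
have [k c'k] := connected_deg0_scalar conn c'0.
by exists k; rewrite x21c cc' c'k -mulrA mulr_algl.
Qed.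

Lemma quasi_comm_xr R x1 x2 :
  quasi_comm_skewPBW2 R x1 x2 -> forall i r, r \in R ->
  exists a b, [/\ a \in R, b \in R & xx x1 x2 i * r = a * x1 + b * x2].
Proof.
case=> [[subR _ _ _] qc_r _] i r rR; have R0 := subalg0 subR.
have [->|r_neq0] := eqVneq r 0; first by exists 0, 0; rewrite !mul0r mulr0 addr0.
have [c [cR _ ->]] := qc_r i r rR r_neq0.
by case: i; [exists 0, c; rewrite mul0r add0r | exists c, 0; rewrite mul0r addr0].
Qed.

Lemma graded_skewPBW2_xr R Rg x1 x2 :
  graded_skewPBW2 R Rg x1 x2 -> forall i m r, r \in Rg m ->
  exists a b d, [/\ a \in Rg m, b \in Rg m, d \in Rg m.+1 &
    xx x1 x2 i * r = a * x1 + b * x2 + d].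
Proof.
case=> [_ [_ [Rg0 _]] sigma_x _] i m r rRg.
have [sigma [_ _ _ sigmaRg deltaRg]] := sigma_x i.
move: (deltaRg m r rRg) => {deltaRg}; case: i => /= dRg.
- exists 0, (sigma r), (x2 * r - sigma r * x2).
  by rewrite mul0r add0r subrKC sigmaRg.
- exists (sigma r), 0, (x1 * r - sigma r * x1).
  by rewrite mul0r addr0 subrKC sigmaRg.
Qed.

End QuasiCommutativeSkewPBW.

Theorem corollary3p3 (K : fieldType) (A : algType K) (R : {pred A})
    (Rg : nat -> {pred A}) (x1 x2 : A) :
  connected_graded_qc_skewPBW2 R Rg x1 x2 ->
  connected_graded_trimmed_rdo R Rg x1 x2.
Proof.
move=> cgqc; have [k x21k] := connected_graded_qc_x2x1_scalar cgqc.
case: cgqc => [qc gr conn]; have [[subR freeR _ _] _ _] := qc.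
have [_ grading _ _] := gr.
have xr := quasi_comm_xr qc.
have x21 : x2 * x1 = k *: (x1 * x2) + 0 *: (x1 ^+ 2) + 0 * x1 + 0 * x2 + 0.
  by rewrite scale0r !mul0r !addr0.
split=> //.
- split=> //; first exact: free_basis_generated.
  + by exists k, 0, 0, 0, 0; rewrite subalg0.
  + move=> i r rR; have [a [b [aR bR ->]]] := xr i r rR.
    by exists a, b, 0; rewrite addr0 subalg0.
- by split=> //; exists k, 0; rewrite scale0r addr0.
- have [_ [Rg0 _]] := grading.
  split=> //; last exact: graded_skewPBW2_xr gr.
  by exists k, 0, 0, 0, 0.
Qed.
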